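(* For every typed DAG task $G=(V,E,\gamma,c)$ and every platform with $M_s\ge 1$ cores of each type $s\in S$, \[ \max_{\pi}\Big(len(\pi)+\sum_{s\in S}\sum_{v\in\mathrm{ivs}(\pi,s)}\frac{c(v)}{M_s}\Big)\;\le\; len(\hat G)+\sum_{s\in S}\frac{vol_s(G)}{M_s}, \] (maximum over paths $\pi$ of $G$), and there exist typed DAG tasks and platforms for which the inequality is strict.
   Context: A typed DAG task is $G=(V,E,\gamma,c)$ where $(V,E)$ is a finite directed acyclic graph with a unique source and a unique sink, $S$ is a finite set of core types, $\gamma:V\to S$ gives the type of each vertex, and $c:V\to\mathbb{R}_{\ge0}$ gives the WCET of each vertex. $vol_s(G)=\sum_{u\in V,\gamma(u)=s}c(u)$; for a path $\pi$, $len(\pi)=\sum_{u\in\pi}c(u)$. The scaled graph $\hat G$ has the same vertices, edges and types as $G$ with weights $\hat c(v)=c(v)(1-1/M_{\gamma(v)})$, and $len(\hat G)$ is its longest path length w.r.t. $\hat c$. $\mathrm{ans}(u)$, $\mathrm{des}(u)$ denote ancestors and descendants of $u$. For $v\in V$, $\mathrm{par}(v)=\{u\in V: u\ne v,\ \gamma(u)=\gamma(v),\ u\notin \mathrm{ans}(v)\cup\mathrm{des}(v)\}$; for a path $\pi=(\tau_1,\dots,\tau_k)$, $\mathrm{ivs}(\pi,s)=\bigcup_{i:\gamma(\tau_i)=s}\mathrm{par}(\tau_i)$. (The left side is the bound NEW-B-2, the right side NEW-B-1; the paper states ''NEW-B-2 strictly dominates NEW-B-1''.) *)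

From mathcomp Require Import all_boot all_order all_algebra.
Set Implicit Arguments. Unset Strict Implicit. Unset Printing Implicit Defensive.
Import Order.TTheory GRing.Theory Num.Theory.
Local Open Scope ring_scope.

Section TypedDAG.
Variables (R : realFieldType) (V S : finType).
Implicit Types (e : rel V) (gamma : V -> S) (c : V -> R) (M : S -> nat).

Definition is_path e (p : seq V) : bool :=
  if p is x :: p' then path e x p' else false.

Definition acyclic e : bool :=
  [forall x, forall y, e x y ==> ~~ connect e y x].

Definition sources e : {set V} := [set v | [forall u, ~~ e u v]].
Definition sinks e : {set V} := [set v | [forall u, ~~ e v u]].

Definition typed_dag e : bool :=
  [&& acyclic e, #|sources e| == 1%N & #|sinks e| == 1%N].

Definition par e gamma (v : V) : {set V} :=
  [set u | [&& u != v, gamma u == gamma v, ~~ connect e u v & ~~ connect e v u]].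

Definition ivs e gamma (p : seq V) (s : S) : {set V} :=
  \bigcup_(x <- p | gamma x == s) par e gamma x.

Definition plen (w : V -> R) (p : seq V) : R := \sum_(x <- p) w x.

(* maximum of f over all paths of G (paths in a DAG have at most #|V|
   vertices; the default 0 is harmless since all values are >= 0). *)
Definition maxpath e (f : seq V -> R) : R :=
  \big[Num.max/0]_(n < #|V|.+1)
     \big[Num.max/0]_(t : n.-tuple V | is_path e t) f t.

Definition vol gamma c (s : S) : R := \sum_(u | gamma u == s) c u.

(* scaled weights of \hat G *)
Definition chat gamma c M (v : V) : R := c v * (1 - ((M (gamma v))%:R)^-1).

Definition len_hat e gamma c M : R := maxpath e (plen (chat gamma c M)).

Definition newB2 e gamma c M : R :=
  maxpath e (fun p => plen c p +
     \sum_(s : S) \sum_(v in ivs e gamma p s) c v / (M s)%:R).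

Definition newB1 e gamma c M : R :=
  len_hat e gamma c M + \sum_(s : S) vol gamma c s / (M s)%:R.

End TypedDAG.

From mathcomp Require Import all_boot all_order all_algebra.
From mathcomp Require Import lra.
Set Implicit Arguments. Unset Strict Implicit. Unset Printing Implicit Defensive.
Import Order.TTheory GRing.Theory Num.Theory.
Local Open Scope ring_scope.

(* Split every weight as c(v) = ĉ(v) + c(v)/M_γ(v). Along a path π the ĉ-part is
   at most len(Ĝ). For each type s, the vertices of π of type s and the set
   ivs(π, s) are disjoint, because any two vertices of a path are comparable
   whereas a vertex of par(x) is incomparable with x; both consist of vertices
   of type s, so their weights add up to at most vol_s(G).
   For strictness take the diamond 0 -> {1, 2} -> 3 with four distinct types,
   one core of each type and unit weight on 1 and 2 only: ivs is always empty
   and every path misses 1 or 2, so NEW-B-2 = 1 < 2 = NEW-B-1. *)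

Section PathFacts.
Variables (V : finType) (e : rel V).

Lemma connect_rank_le (r : V -> nat) :
  (forall x y, e x y -> (r x < r y)%N) ->
  forall x y, connect e x y -> (r x <= r y)%N.
Proof.
move=> r_lt x y /connectP[p xp ->] {y}.
elim: p x xp => [|z p IHp] x //= /andP[/r_lt lt_xz /IHp].
exact/leq_trans/ltnW.
Qed.

Lemma acyclic_rank (r : V -> nat) :
  (forall x y, e x y -> (r x < r y)%N) -> acyclic e.
Proof.
move=> r_lt; apply/forallP => x; apply/forallP => y; apply/implyP => exy.
by apply/negP => /(connect_rank_le r_lt); rewrite leqNgt r_lt.
Qed.

Lemma is_path_uniq p : acyclic e -> is_path e p -> uniq p.
Proof.
move=> acyc; case: p => // x p; elim: p x => [|y p IHp] x //= /andP[exy yp].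
have /= -> := IHp y yp; rewrite andbT; apply/negP => xp.
have cyx : connect e y x := path_connect yp xp.
by move/forallP: acyc => /(_ x) /forallP /(_ y); rewrite exy cyx.
Qed.

Lemma is_path_comparable p :
  is_path e p -> {in p &, forall y z, connect e y z || connect e z y}.
Proof.
case: p => // x p; elim: p x => [|w p IHp] x xp y z.
  by rewrite !inE => /eqP-> /eqP->; rewrite connect0.
have xc := path_connect xp.
rewrite inE => /predU1P[-> zp | yp]; first by rewrite xc.
rewrite inE => /predU1P[-> | zp]; first by rewrite xc ?orbT // inE yp orbT.
by case/andP: xp => _ /IHp; apply.
Qed.

Variable R : realFieldType.
Implicit Type f : seq V -> R.

Lemma maxpath_ge0 f : 0 <= maxpath e f.
Proof. exact: bigmax_ge_id. Qed.

Lemma maxpath_le f B :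
  0 <= B -> (forall p, is_path e p -> f p <= B) -> maxpath e f <= B.
Proof. by move=> B0 fB; apply: bigmax_le => // n _; apply: bigmax_le => // t /fB. Qed.

Lemma le_maxpath f p : is_path e p -> (size p <= #|V|)%N -> f p <= maxpath e f.
Proof.
move=> pp; rewrite -ltnS => lt_pV.
apply: le_trans (le_bigmax _ _ (Ordinal lt_pV)).
exact: (le_bigmax_cond 0 (fun t : (size p).-tuple V => f t) (j := in_tuple p) pp).
Qed.

Lemma plen_le_sum_notin (c : V -> R) p a :
  (forall v, 0 <= c v) -> uniq p -> a \notin p -> plen c p <= \sum_(v | v != a) c v.
Proof.
move=> c0 up ap; rewrite /plen big_uniq // big_mkcond [X in _ <= X]big_mkcond.
apply: ler_sum => v _; case: ifPn => [vp | _]; last by case: ifP.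
by rewrite ifT //; apply: contraNneq ap => <-.
Qed.

End PathFacts.

Section NewBounds.
Variables (R : realFieldType) (V S : finType) (e : rel V) (gamma : V -> S).
Implicit Types (c : V -> R) (M : S -> nat) (p : seq V).

Lemma ivsP p s v :
  reflect (exists2 x, (gamma x == s) && (x \in p) & v \in par e gamma x)
          (v \in ivs e gamma p s).
Proof.
rewrite /ivs -big_filter bigcup_seq.
apply: (iffP bigcupP) => -[x xp vx]; exists x => //.
  by rewrite mem_filter in xp.
by rewrite mem_filter.
Qed.

Lemma ivs_type p s v : v \in ivs e gamma p s -> gamma v = s.
Proof. by case/ivsP=> x /andP[/eqP <- _]; rewrite inE => /and4P[_ /eqP]. Qed.

Lemma ivs_notin_path p s v : is_path e p -> v \in ivs e gamma p s -> v \notin p.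
Proof.
move=> pp /ivsP[x /andP[_ xp]]; rewrite inE => /and4P[_ _ /negbTE nvx /negbTE nxv].
by apply/negP => vp; have := is_path_comparable pp vp xp; rewrite nvx nxv.
Qed.

Lemma ivs_injective p s : injective gamma -> ivs e gamma p s = set0.
Proof.
move=> inj_gamma; apply/setP => v; rewrite inE; apply/ivsP => -[x _].
by rewrite inE => /and4P[/eqP vx /eqP /inj_gamma].
Qed.

Lemma sum_path_ivs_le_vol c p s :
  (forall v, 0 <= c v) -> is_path e p -> uniq p ->
  \sum_(x <- p | gamma x == s) c x + \sum_(v in ivs e gamma p s) c v <= vol gamma c s.
Proof.
move=> c0 pp up; rewrite -big_filter big_uniq ?filter_uniq //=.
rewrite /vol big_mkcond [X in _ + X]big_mkcond [X in _ <= X]big_mkcond -big_split /=.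
apply: ler_sum => v _; rewrite mem_filter.
have [vi | _] := boolP (v \in ivs e gamma p s).
  by rewrite (negbTE (ivs_notin_path pp vi)) andbF (ivs_type vi) eqxx add0r.
by rewrite addr0; case: (gamma v == s); case: (v \in p).
Qed.

Lemma plen_split c M p :
  plen c p = plen (chat gamma c M) p + \sum_(x <- p) c x / (M (gamma x))%:R.
Proof. by rewrite /plen -big_split /=; apply: eq_bigr => x _; rewrite /chat mulrBr mulr1 subrK. Qed.

Lemma path_newB2_le c M p :
  acyclic e -> (forall v, 0 <= c v) -> is_path e p ->
  plen c p + \sum_s \sum_(v in ivs e gamma p s) c v / (M s)%:R
  <= plen (chat gamma c M) p + \sum_s vol gamma c s / (M s)%:R.
Proof.
move=> acyc c0 pp; rewrite (plen_split c M) -addrA lerD2l.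
rewrite (partition_big gamma xpredT) //= -big_split /=; apply: ler_sum => s _.
rewrite (eq_bigr (fun x => c x / (M s)%:R)) => [|x /eqP-> //].
rewrite -!mulr_suml -mulrDl; apply: ler_wpM2r; first by rewrite invr_ge0.
exact: sum_path_ivs_le_vol (is_path_uniq acyc pp).
Qed.

Lemma newB2_le_newB1 c M :
  acyclic e -> (forall v, 0 <= c v) -> newB2 e gamma c M <= newB1 e gamma c M.
Proof.
move=> acyc c0; apply: maxpath_le => [|p pp].
  rewrite addr_ge0 ?maxpath_ge0 // sumr_ge0 // => s _.
  by rewrite divr_ge0 // sumr_ge0.
apply: le_trans (path_newB2_le M acyc c0 pp) _; rewrite lerD2r.
apply: le_maxpath => //; move/card_uniqP: (is_path_uniq acyc pp) => <-.
exact: max_card.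
Qed.

Lemma len_hat_unit_cores c M : (forall s, M s = 1%N) -> len_hat e gamma c M = 0.
Proof.
move=> M1; apply/le_anti; rewrite maxpath_ge0 andbT.
apply: maxpath_le => // p _; rewrite /plen big1 // => x _.
by rewrite /chat M1 mulr1n invr1 subrr mulr0.
Qed.

End NewBounds.

Section Diamond.
Variable R : realFieldType.

Definition diamond : rel 'I_4 := fun i j =>
  [|| (i == 0 :> nat) && (j == 1 :> nat), (i == 0 :> nat) && (j == 2 :> nat),
      (i == 1 :> nat) && (j == 3 :> nat) | (i == 2 :> nat) && (j == 3 :> nat)].

Definition diamond_weight (i : 'I_4) : R :=
  if (i == 1 :> nat) || (i == 2 :> nat) then 1 else 0.

Local Notation v1 := (Ordinal (isT : (1 < 4)%N)).
Local Notation v2 := (Ordinal (isT : (2 < 4)%N)).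

Lemma diamond_rank (r : nat -> nat) :
  (r 0 < r 1)%N -> (r 0 < r 2)%N -> (r 1 < r 3)%N -> (r 2 < r 3)%N ->
  forall i j, diamond i j -> (r i < r j)%N.
Proof. by move=> r01 r02 r13 r23 i j /or4P[] /andP[/eqP-> /eqP->]. Qed.

Lemma diamond_acyclic : acyclic diamond.
Proof. exact: (acyclic_rank (diamond_rank (r := id) isT isT isT isT)). Qed.

Lemma diamond_incomparable : ~~ connect diamond v1 v2 && ~~ connect diamond v2 v1.
Proof.
pose swap12 := nth 0 [:: 0; 2; 1; 3]%N.
apply/andP; split; apply/negP.
  by move/(connect_rank_le (diamond_rank (r := swap12) isT isT isT isT)).
by move/(connect_rank_le (diamond_rank (r := id) isT isT isT isT)).
Qed.

Lemma diamond_sources : sources diamond = [set ord0].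
Proof.
apply/setP => -[[|[|[|[|n]]]] lt_n4] //; rewrite !inE.
- by apply/forallP => u; rewrite /diamond /= !andbF.
- by apply/negbTE/forallPn; exists ord0.
- by apply/negbTE/forallPn; exists ord0.
- by apply/negbTE/forallPn; exists v1.
Qed.

Lemma diamond_sinks : sinks diamond = [set ord_max].
Proof.
apply/setP => -[[|[|[|[|n]]]] lt_n4] //; rewrite !inE.
- by apply/negbTE/forallPn; exists v1.
- by apply/negbTE/forallPn; exists ord_max.
- by apply/negbTE/forallPn; exists ord_max.
- by apply/forallP => u; rewrite /diamond /=.
Qed.

Lemma diamond_typed_dag : typed_dag diamond.
Proof. by rewrite /typed_dag diamond_acyclic diamond_sources diamond_sinks !cards1. Qed.

Lemma diamond_weight_ge0 i : 0 <= diamond_weight i.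
Proof. by rewrite /diamond_weight; case: ifP. Qed.

Lemma diamond_weight_sum : \sum_i diamond_weight i = 2.
Proof. by rewrite !big_ord_recl big_ord0 /diamond_weight /= !add0r addr0. Qed.

Lemma diamond_path_misses p : is_path diamond p -> (v1 \notin p) || (v2 \notin p).
Proof.
move=> pp; rewrite -negb_and; apply/negP => /andP[v1p v2p].
have := is_path_comparable pp v1p v2p.
by case/andP: diamond_incomparable => /negbTE-> /negbTE->.
Qed.

Lemma diamond_newB2_le1 : newB2 diamond id diamond_weight (fun=> 1%N) <= 1.
Proof.
apply: maxpath_le => // p pp.
rewrite big1 ?addr0 => [|s _]; last by rewrite ivs_injective ?big_set0.
have up := is_path_uniq diamond_acyclic pp.
have sum_notin a : diamond_weight a = 1 -> \sum_(v | v != a) diamond_weight v = 1.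
  by move=> wa; move: diamond_weight_sum; rewrite (bigD1 a) //= wa; lra.
by case/orP: (diamond_path_misses pp) => ap;
  apply: le_trans (plen_le_sum_notin diamond_weight_ge0 up ap) _; rewrite sum_notin.
Qed.

Lemma diamond_newB1_eq2 : newB1 diamond id diamond_weight (fun=> 1%N) = 2.
Proof.
rewrite /newB1 len_hat_unit_cores // add0r -diamond_weight_sum.
by apply: eq_bigr => s _; rewrite divr1 /vol big_pred1_eq.
Qed.

End Diamond.

Theorem corollary3 (R : realFieldType) :
  (forall (V S : finType) (e : rel V) (gamma : V -> S) (c : V -> R)
          (M : S -> nat),
     typed_dag e -> (forall v, 0 <= c v) -> (forall s, (1 <= M s)%N) ->
     newB2 e gamma c M <= newB1 e gamma c M) /\
  (exists (V S : finType) (e : rel V) (gamma : V -> S) (c : V -> R)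
          (M : S -> nat),
     [/\ typed_dag e, (forall v, 0 <= c v), (forall s, (1 <= M s)%N) &
         newB2 e gamma c M < newB1 e gamma c M]).
Proof.
split.
  move=> V S e gamma c M /and3P[acyc _ _] c0 _.
  exact: newB2_le_newB1.
exists 'I_4, 'I_4, diamond, id, (diamond_weight R), (fun _ => 1%N).
split=> //; first exact: diamond_typed_dag.
  exact: diamond_weight_ge0.
by rewrite diamond_newB1_eq2; apply: le_lt_trans (diamond_newB2_le1 R) _; rewrite ltr1n.
Qed.
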